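(* Let $n,k,d,\mu$ be integers with $1\le k\le d<n$ and $\mu\in\{1,2,\dots,k\}$, and let $\mathbb{F}_q$ be a finite field with $q\ge n$. Define $$\alpha(k,d;\mu)=\sum_{m=0}^{\mu}(d-k)^{\mu-m}\binom{k}{m},\qquad \beta(k,d;\mu)=\sum_{m=0}^{\mu}(d-k)^{\mu-m}\binom{k-1}{m-1},$$ $$F(k,d;\mu)=\sum_{m=0}^{\mu}k(d-k)^{\mu-m}\binom{k}{m}-\binom{k}{\mu+1}.$$ Then there exists a linear $(n,k,d)$ exact-repair regenerating code over $\mathbb{F}_q$ with parameters $(\alpha,\beta,F)=(\alpha(k,d;\mu),\beta(k,d;\mu),F(k,d;\mu))$.
   Context: Conventions: $0^0=1$; $\binom{\ell}{m}=0$ if $m<0$ or $m>\ell$. An $(n,k,d)$ exact-repair regenerating code over $\mathbb{F}_q$ with parameters $(\alpha,\beta,F)$ encodes a file consisting of $F$ symbols of $\mathbb{F}_q$ into the contents of $n$ nodes, each node storing $\alpha$ symbols of $\mathbb{F}_q$, such that: (data recovery) for every set of $k$ nodes, the file is a function of the contents of these $k$ nodes; (exact repair) for every node $f$ and every set $\mathcal{H}$ of $d$ nodes not containing $f$, each helper $h\in\mathcal H$ can send $\beta$ symbols of $\mathbb{F}_q$, computed from the content of node $h$ (and the identities of $h$ and $f$), from which the content of node $f$ is exactly reconstructed. The code is linear if all node contents and all transmitted repair symbols are $\mathbb{F}_q$-linear functions of the file symbols. *)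

From HB Require Import structures.
From mathcomp Require Import all_boot all_order all_algebra all_fingroup all_field.
Set Implicit Arguments. Unset Strict Implicit. Unset Printing Implicit Defensive.
Import GRing.Theory.

(* alpha(k,d;mu) = sum_{m=0}^{mu} (d-k)^{mu-m} C(k,m)   (0^0 = 1 via expn) *)
Definition alpha_par (k d mu : nat) : nat :=
  \sum_(m < mu.+1) (d - k) ^ (mu - m) * 'C(k, m).

(* beta(k,d;mu) = sum_{m=0}^{mu} (d-k)^{mu-m} C(k-1,m-1), with C(l,-1) = 0 *)
Definition binom_ext (l : nat) (m : nat) : nat :=
  if m == 0 then 0 else 'C(l, m.-1).
Definition beta_par (k d mu : nat) : nat :=
  \sum_(m < mu.+1) (d - k) ^ (mu - m) * binom_ext k.-1 m.

(* F(k,d;mu) = sum_{m=0}^{mu} k (d-k)^{mu-m} C(k,m) - C(k,mu+1)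
   (the difference is always nonnegative, so truncated subtraction is exact) *)
Definition F_par (k d mu : nat) : nat :=
  \sum_(m < mu.+1) k * (d - k) ^ (mu - m) * 'C(k, m) - 'C(k, mu.+1).

(* A linear (n,k,d) exact-repair regenerating code over the field K with
   parameters (a, b, Fs):
   - the file is x : 'rV[K]_Fs;
   - node i stores x *m G i  (a linear function of the file, a symbols);
   - helper h repairing failed node f sends rep h f (content of h), b symbols,
     and this transmitted data must be a linear function of the file;
   - data recovery: the file is a function of the contents of any k nodes,
     i.e. files agreeing on the contents of those nodes are equal;
   - exact repair: content of f is a function of the d transmitted vectors. *)
Local Open Scope ring_scope.
Definition linear_regen_code (K : fieldType) (n k d a b Fs : nat)
  (G : 'I_n -> 'M[K]_(Fs, a))
  (rep : 'I_n -> 'I_n -> 'rV[K]_a -> 'rV[K]_b) : Prop :=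
  [/\
      (forall (h f : 'I_n) (c : K) (x y : 'rV[K]_Fs),
          rep h f ((c *: x + y) *m G h)
          = c *: rep h f (x *m G h) + rep h f (y *m G h)),
      (forall (S : {set 'I_n}), #|S| = k ->
         forall x y : 'rV[K]_Fs,
           (forall i, i \in S -> x *m G i = y *m G i) -> x = y)
    &
      (forall (f : 'I_n) (H : {set 'I_n}), f \notin H -> #|H| = d ->
         forall x y : 'rV[K]_Fs,
           (forall h, h \in H -> rep h f (x *m G h) = rep h f (y *m G h)) ->
           x *m G f = y *m G f)].
Arguments linear_regen_code K n k d a b Fs G rep : clear implicits.

(* Write d = k + t and let M = T(K^t) (x) Lambda(K^k): an element of M is a
   family of scalars indexed by pairs (w, I) of a word w over 'I_t and a set
   I of 'I_k, of degree |w| + |I|.  The homogeneous part M_p has dimension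
   sum_m t^(p-m) C(k,m), so dim M_mu = alpha and, for the subspace of M_(mu-1)
   avoiding a fixed index a0 of 'I_k, the dimension is beta.  For every
   psi in K^d there is a contraction iota_psi : M -> M of degree -1 with
     iota_psi o iota_psi = 0   and   iota_psi (L_j x) = psi_j x - L_j (iota_psi x),
   where L_j is left multiplication by the j-th basis vector of K^d.

   Node i (evaluation point xi_i) stores
   D_i = sum_j xi_i^j x_j.  Data recovery from k nodes is an induction on |I|
   using the cycle condition and a Vandermonde argument.  To repair node f,
   helper h sends the coordinates of iota_psi D_h avoiding a0, for
   psi = (xi_f^j)_j; as iota_psi o iota_psi = 0 these determine iota_psi D_h,
   a Vandermonde argument over d helpers then recovers every iota_psi x_j, and
   contracting the cycle condition gives D_f = sum_j L_j (iota_psi x_j). *)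

From HB Require Import structures.
From mathcomp Require Import all_boot all_order all_algebra all_fingroup all_field.
From mathcomp Require Import ring.
From Stdlib Require Import FunctionalExtensionality.
Set Implicit Arguments. Unset Strict Implicit. Unset Printing Implicit Defensive.
Import GRing.Theory.

Section Monomials.
Variables (t k : nat) (Q : {set 'I_k}).

(* Index type of the basis of the degree-p part of M with exterior support
   inside Q: a split p = (p - m) + m, a word of length p - m and an m-subset
   of Q. *)
Definition monomial p :=
  {m : 'I_p.+1 & ((p - m).-tuple 'I_t * {J : {set 'I_k} | (#|J| == m) && (J \subset Q)})%type}.

Lemma card_monomial p :
  #|{: monomial p}| = \sum_(m < p.+1) t ^ (p - m) * 'C(#|Q|, m).
Proof.
rewrite card_tagged sumnE big_map big_enum /=; apply: eq_bigr => m _.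
rewrite card_prod card_tuple card_ord card_sig -(cards_draws Q m); congr (_ * _).
by apply: eq_card => J; rewrite !inE andbC.
Qed.

Definition mono p (x : monomial p) : seq 'I_t * {set 'I_k} :=
  (val (tagged x).1, val (tagged x).2).

Lemma mono_inj p : injective (@mono p).
Proof.
case=> m [w [J hJ]]; case=> m' [w' [J' hJ']] [] /= ew eJ; subst J'.
have emm : m = m'.
  case/andP: hJ => /eqP hJ _; case/andP: hJ' => /eqP hJ' _.
  by apply/val_inj; rewrite /= -hJ -hJ'.
subst m'; congr existT; congr pair; first exact: val_inj.
by congr exist; apply: bool_irrelevance.
Qed.

Lemma mono_surj p (w : seq 'I_t) (I : {set 'I_k}) :
  (size w + #|I|)%N = p -> I \subset Q -> exists x : monomial p, mono x = (w, I).
Proof.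
move=> hp IQ.
have hm : (#|I| < p.+1)%N by rewrite ltnS -hp leq_addl.
have hw : size w == p - Ordinal hm by rewrite /= -hp addnK.
have hJ : (#|I| == Ordinal hm) && (I \subset Q) by rewrite eqxx IQ.
by exists (existT _ (Ordinal hm) (Tuple hw, exist _ I hJ)).
Qed.

Lemma mono_deg p (x : monomial p) : (size (mono x).1 + #|(mono x).2|)%N = p.
Proof.
case: x => m [w J] /=; rewrite size_tuple; move: (valP J) => /andP [/eqP -> _].
by rewrite subnK // -ltnS.
Qed.

End Monomials.

Local Open Scope ring_scope.

Section ExteriorContraction.
Variables (K : fieldType) (k : nat).
Implicit Types (I J : {set 'I_k}) (y z : {set 'I_k} -> K).

(* Elements of Lambda(K^k) are families y indexed by subsets I, with e_I the
   increasing wedge product; ext_sign j I is the sign of moving e_j past the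
   elements of I smaller than j. *)
Definition ext_sign (j : 'I_k) I : K := (-1) ^+ #|[set i in I | (i < j)%N]|.

Lemma ext_sign_sq j I : ext_sign j I * ext_sign j I = 1.
Proof. by rewrite /ext_sign -exprD addnn -mul2n exprM sqrrN !expr1n. Qed.

Lemma ext_signU a j J : a \notin J ->
  ext_sign j (a |: J) = (if (a < j)%N then -1 else 1) * ext_sign j J.
Proof.
move=> aJ; rewrite /ext_sign.
have -> : [set i in a |: J | (i < j)%N] =
   if (a < j)%N then a |: [set i in J | (i < j)%N] else [set i in J | (i < j)%N].
  apply/setP=> i; rewrite !inE; case: ifP => aj; rewrite ?inE;
  case: (eqVneq i a) => [->|]; rewrite ?aj ?(negbTE aJ) //=.
case: ifP => _; last by rewrite mul1r.
by rewrite cardsU1 inE (negbTE aJ) /= exprS.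
Qed.

Lemma ext_sign_conj j I (x : K) : ext_sign j I * x * ext_sign j I = x.
Proof. by rewrite mulrC mulrA ext_sign_sq mul1r. Qed.

Variable psi : 'I_k -> K.

Definition ext_contract y I :=
  \sum_(j : 'I_k | j \notin I) psi j * ext_sign j I * y (j |: I).

Definition ext_wedge (a : 'I_k) y I :=
  if a \in I then ext_sign a (I :\ a) * y (I :\ a) else 0.

Lemma ext_contractD y z I :
  ext_contract (fun J => y J + z J) I = ext_contract y I + ext_contract z I.
Proof. by rewrite /ext_contract -big_split; apply: eq_bigr => j _ /=; ring. Qed.

Lemma ext_contractZ (c : K) y I :
  ext_contract (fun J => c * y J) I = c * ext_contract y I.
Proof. by rewrite /ext_contract mulr_sumr; apply: eq_bigr => j _ /=; ring. Qed.

Lemma ext_contract_sum (T : Type) (r : seq T) (P : pred T)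
    (F : T -> {set 'I_k} -> K) I :
  ext_contract (fun J => \sum_(i <- r | P i) F i J) I
  = \sum_(i <- r | P i) ext_contract (F i) I.
Proof.
by rewrite /ext_contract exchange_big; apply: eq_bigr => j _ /=; rewrite mulr_sumr.
Qed.

Lemma ext_wedgeD a y z I :
  ext_wedge a (fun J => y J + z J) I = ext_wedge a y I + ext_wedge a z I.
Proof. by rewrite /ext_wedge; case: ifP => _; rewrite ?addr0 // mulrDr. Qed.

Lemma ext_wedgeZ a (c : K) y I :
  ext_wedge a (fun J => c * y J) I = c * ext_wedge a y I.
Proof. by rewrite /ext_wedge; case: ifP => _; rewrite ?mulr0 // mulrCA. Qed.

Lemma ext_wedgeB a y z I :
  ext_wedge a (fun J => y J - z J) I = ext_wedge a y I - ext_wedge a z I.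
Proof. by rewrite /ext_wedge; case: ifP => _; rewrite ?subr0 // mulrBr. Qed.

Lemma ext_wedge_sum a (T : Type) (r : seq T) (P : pred T)
    (F : T -> {set 'I_k} -> K) I :
  ext_wedge a (fun J => \sum_(i <- r | P i) F i J) I
  = \sum_(i <- r | P i) ext_wedge a (F i) I.
Proof. by rewrite /ext_wedge; case: ifP => _; [rewrite mulr_sumr | rewrite big1]. Qed.

Lemma ext_contract_wedge a y I :
  ext_contract (ext_wedge a y) I = psi a * y I - ext_wedge a (ext_contract y) I.
Proof.
rewrite {1}/ext_contract; case aI: (a \in I); last first.
  rewrite /ext_wedge aI subr0 (bigD1 a) ?aI //= in_setU1 eqxx /= setU1K ?aI //.
  rewrite big1 ?addr0; last first.
    by move=> j /andP [_ ja]; rewrite in_setU1 eq_sym (negbTE ja) aI mulr0.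
  by rewrite -mulrA (mulrA (ext_sign a I)) ext_sign_sq mul1r.
rewrite {2}/ext_wedge aI /ext_contract.
rewrite [X in _ - _ * X](bigD1 a) /=; last by rewrite in_setD1 eqxx.
rewrite setD1K // mulrDr opprD addrA -!mulrA [psi a * _]mulrC !mulrA.
rewrite ext_sign_conj.
rewrite [y I * _]mulrC subrr sub0r mulr_sumr -sumrN.
have aJ : a \notin I :\ a by rewrite in_setD1 eqxx.
apply: eq_big => [j|j jI].
  rewrite in_setD1 negb_and negbK; case: (eqVneq j a) => [->|] //=.
    by rewrite aI.
  by rewrite andbT.
have ja : j != a by apply: contraNneq jI => ->.
have jJ : j \notin I :\ a by rewrite in_setD1 negb_and (negbTE jI) orbT.
have -> : ext_wedge a y (j |: I) = ext_sign a (j |: (I :\ a)) * y (j |: (I :\ a)).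
  rewrite /ext_wedge in_setU1 aI orbT.
  have -> // : (j |: I) :\ a = j |: (I :\ a).
  apply/setP => i; rewrite !inE; case: (eqVneq i a) => [->|ia] //=.
  by rewrite eq_sym (negbTE ja).
rewrite -{1}(setD1K aI) ext_signU // ext_signU //.
by case: (ltngtP a j) => [aj|ja'|/val_inj eja]; [ring | ring | rewrite eja eqxx in ja].
Qed.

Lemma sum_alternating (g : 'I_k -> 'I_k -> K) :
  (forall j, g j j = 0) -> (forall j j', g j' j = - g j j') ->
  \sum_j \sum_j' g j j' = 0.
Proof.
move=> g0 gA.
have E j j' : g j j' = (if (j < j')%N then g j j' else 0)
                       + (if (j' < j)%N then g j j' else 0).
  by case: (ltngtP j j') => [h|h|/val_inj->]; rewrite ?addr0 ?add0r.
under eq_bigr do under eq_bigr do rewrite E.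
under eq_bigr do rewrite big_split.
rewrite big_split /= [X in _ + X]exchange_big /=.
rewrite -big_split /= big1 // => j _; rewrite -big_split big1 // => j' _ /=.
by case: ifP => _; rewrite ?addr0 // gA addrC subrr.
Qed.

(* The interior product squares to zero: the terms for (j, j') and (j', j)
   cancel. *)
Lemma ext_contract_contract y I : ext_contract (ext_contract y) I = 0.
Proof.
rewrite /ext_contract.
under eq_bigr do rewrite mulr_sumr.
rewrite big_mkcond /=.
under eq_bigr do rewrite big_mkcond /=.
rewrite -[RHS](@sum_alternating (fun j j' =>
   if (j \notin I) && (j' \notin I) && (j' != j) then
     psi j * ext_sign j I * (psi j' * ext_sign j' (j |: I) * y (j' |: (j |: I)))
   else 0)).
- apply: eq_bigr => j _; case: ifP => jI; last first.
    by rewrite big1 // => j' _; rewrite /= jI.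
  by apply: eq_bigr => j' _; rewrite in_setU1 negb_or /= andbC.
- by move=> j; rewrite eqxx andbF.
move=> j j'; rewrite [j' == j]eq_sym [(j' \notin I) && (j \notin I)]andbC.
case: ifP => [/andP [/andP [jI j'I] jj']|]; last by rewrite oppr0.
rewrite setUCA ext_signU // ext_signU //.
by case: (ltngtP j j') => [h|h|/val_inj e]; [ring | ring | rewrite e eqxx in jj'].
Qed.

End ExteriorContraction.

Section MixedContraction.
Variables (K : fieldType) (t k : nat) (psiB : 'I_t -> K) (psiA : 'I_k -> K).

(* Elements of M = T(K^t) (x) Lambda(K^k), in coordinates. *)
Definition mixed := seq 'I_t -> {set 'I_k} -> K.
Implicit Types (x y : mixed) (w : seq 'I_t) (I J : {set 'I_k}).

Definition head_contract x w I := \sum_(b : 'I_t) psiB b * x (b :: w) I.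

Definition strip (c : 'I_t) x : mixed := fun w I => x (c :: w) I.

(* The contraction iota of M by (psiB, psiA): it acts on the tensor letters
   from left to right with alternating signs, then on the exterior part. *)
Fixpoint contract_rec w x I : K :=
  match w with
  | [::] => head_contract x [::] I + ext_contract psiA (x [::]) I
  | c :: w' => head_contract x w I - contract_rec w' (strip c x) I
  end.
Definition contract x : mixed := fun w I => contract_rec w x I.

Lemma contract_nil x I :
  contract x [::] I = head_contract x [::] I + ext_contract psiA (x [::]) I.
Proof. by []. Qed.

Lemma contract_cons x c w I :
  contract x (c :: w) I = head_contract x (c :: w) I - contract (strip c x) w I.
Proof. by []. Qed.

Lemma head_contract_lin (c : K) x y w I :
  head_contract (fun w I => c * x w I + y w I) w I
  = c * head_contract x w I + head_contract y w I.
Proof. by rewrite /head_contract mulr_sumr -big_split; apply: eq_bigr => b _ /=; ring. Qed.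

Lemma contract_lin (c : K) x y w I :
  contract (fun w I => c * x w I + y w I) w I = c * contract x w I + contract y w I.
Proof.
elim: w x y I => [|e w IH] x y I.
  by rewrite !contract_nil head_contract_lin ext_contractD ext_contractZ; ring.
rewrite !contract_cons head_contract_lin.
have -> : contract (strip e (fun w0 I0 => c * x w0 I0 + y w0 I0)) w I =
          c * contract (strip e x) w I + contract (strip e y) w I by rewrite -IH.
ring.
Qed.

Lemma contract_sum (T : Type) (r : seq T) (P : pred T) (F : T -> mixed) w I :
  contract (fun w I => \sum_(i <- r | P i) F i w I) w I
  = \sum_(i <- r | P i) contract (F i) w I.
Proof.
elim: w F I => [|e w IH] F I.
  rewrite contract_nil ext_contract_sum /head_contract.
  under eq_bigr do rewrite mulr_sumr.
  by rewrite exchange_big -big_split.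
rewrite contract_cons /strip IH /head_contract.
under eq_bigr do rewrite mulr_sumr.
by rewrite exchange_big -sumrB.
Qed.

Lemma contract0 w I : contract (fun _ _ => 0) w I = 0.
Proof. by have := contract_sum (Nil 'I_1) xpredT (fun _ _ _ => 0) w I; rewrite !big_nil. Qed.

Lemma contractZ (c : K) x w I : contract (fun w I => c * x w I) w I = c * contract x w I.
Proof.
have := contract_lin c x (fun _ _ => 0) w I; rewrite contract0 addr0 => <-.
by congr contract_rec; do 2 apply: functional_extensionality => ?; rewrite addr0.
Qed.

Definition lmul_tensor (b : 'I_t) x : mixed :=
  fun w I => if w is c :: w' then (c == b)%:R * x w' I else 0.

(* Left multiplication by e_a, which anticommutes past the |w| tensor letters. *)
Definition lmul_wedge (a : 'I_k) x : mixed :=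
  fun w I => (-1) ^+ size w * ext_wedge a (x w) I.

Lemma ext_contract0 I : ext_contract psiA (fun _ => 0) I = 0.
Proof. by rewrite /ext_contract big1 // => j _; rewrite mulr0. Qed.

Lemma contract_lmul_tensor b x w I :
  contract (lmul_tensor b x) w I = psiB b * x w I - lmul_tensor b (contract x) w I.
Proof.
have head w' : head_contract (lmul_tensor b x) w' I = psiB b * x w' I.
  rewrite /head_contract (bigD1 b) //= eqxx mul1r big1 ?addr0 // => e /negbTE ->.
  by rewrite mul0r mulr0.
case: w => [|c w]; first by rewrite contract_nil head ext_contract0 addr0 subr0.
rewrite contract_cons head /=.
have -> : strip c (lmul_tensor b x) = fun w I => (c == b)%:R * x w I by [].
by rewrite contractZ.
Qed.

Lemma head_contract_lmul_wedge a x w I :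
  head_contract (lmul_wedge a x) w I = - lmul_wedge a (head_contract x) w I.
Proof.
rewrite /head_contract /lmul_wedge ext_wedge_sum mulr_sumr -sumrN.
by apply: eq_bigr => b _ /=; rewrite ext_wedgeZ exprS; ring.
Qed.

Lemma contract_lmul_wedge a x w I :
  contract (lmul_wedge a x) w I = psiA a * x w I - lmul_wedge a (contract x) w I.
Proof.
elim: w x I => [|c w IH] x I.
  rewrite contract_nil head_contract_lmul_wedge.
  have -> : lmul_wedge a x [::] = ext_wedge a (x [::]).
    by apply: functional_extensionality => J; rewrite /lmul_wedge expr0 mul1r.
  rewrite ext_contract_wedge /lmul_wedge /= expr0 !mul1r.
  have -> : contract x [::] =
            fun J => head_contract x [::] J + ext_contract psiA (x [::]) J by [].
  by rewrite ext_wedgeD; ring.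
rewrite contract_cons head_contract_lmul_wedge.
have -> : strip c (lmul_wedge a x) = fun w J => -1 * lmul_wedge a (strip c x) w J.
  do 2 apply: functional_extensionality => ?.
  by rewrite /strip /lmul_wedge /= exprS mulrA.
rewrite contractZ IH.
have -> : lmul_wedge a (contract x) (c :: w) I
          = lmul_wedge a (head_contract x) (c :: w) I
            + lmul_wedge a (contract (strip c x)) w I.
  rewrite /lmul_wedge.
  have -> : contract x (c :: w) =
            fun J => head_contract x (c :: w) J - contract (strip c x) w J by [].
  by rewrite ext_wedgeB /= exprS; ring.
rewrite /strip; ring.
Qed.

Lemma head_contract_swap x w I :
  \sum_b psiB b * head_contract x (b :: w) I = \sum_b psiB b * head_contract (strip b x) w I.
Proof.
rewrite /head_contract /strip; under eq_bigr do rewrite mulr_sumr.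
under [RHS]eq_bigr do rewrite mulr_sumr.
by rewrite exchange_big; apply: eq_bigr => b _; apply: eq_bigr => c _ /=; ring.
Qed.

Lemma contract_contract x w I : contract (contract x) w I = 0.
Proof.
elim: w x I => [|c w IH] x I.
  rewrite contract_nil.
  have -> : contract x [::] =
            fun J => head_contract x [::] J + ext_contract psiA (x [::]) J by [].
  rewrite ext_contractD ext_contract_contract addr0.
  have -> : head_contract x [::] = fun J => \sum_b psiB b * x [:: b] J by [].
  rewrite ext_contract_sum.
  under eq_bigr do rewrite ext_contractZ.
  have -> : head_contract (contract x) [::] I
            = \sum_b psiB b * head_contract x [:: b] I
              - \sum_b psiB b * head_contract (strip b x) [::] I
              - \sum_b psiB b * ext_contract psiA (x [:: b]) I.
    rewrite {1}/head_contract -!sumrB; apply: eq_bigr => b _.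
    by rewrite contract_cons contract_nil /strip; ring.
  by rewrite head_contract_swap; ring.
rewrite contract_cons.
have -> : strip c (contract x) =
          fun u J => -1 * contract (strip c x) u J + head_contract x (c :: u) J.
  by do 2 apply: functional_extensionality => ?; rewrite /strip contract_cons; ring.
rewrite contract_lin IH mulr0 add0r.
have -> : head_contract (contract x) (c :: w) I
          = \sum_b psiB b * head_contract x [:: b, c & w] I
            - \sum_b psiB b * head_contract (strip b x) (c :: w) I
            + \sum_b psiB b * contract (strip c (strip b x)) w I.
  by rewrite {1}/head_contract -!sumrB -big_split; apply: eq_bigr => b _ /=; ring.
rewrite head_contract_swap subrr add0r.
have -> : (fun u J => head_contract x (c :: u) J)
          = fun u J => \sum_b psiB b * strip c (strip b x) u J by [].
rewrite contract_sum; under [X in _ - X]eq_bigr do rewrite contractZ.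
by rewrite subrr.
Qed.

Definition homog p x := forall w I, (size w + #|I|)%N != p -> x w I = 0.

Lemma strip_homog p c x : homog p.+1 x -> homog p (strip c x).
Proof. by move=> h w I hp; apply: h; rewrite /= addSn eqSS. Qed.

Lemma contract_homog0 x : homog 0 x -> forall w I, contract x w I = 0.
Proof.
move=> h0 w; elim: w x h0 => [|c w IH] x h I /=.
  rewrite /head_contract big1 ?add0r; last by move=> b _; rewrite h ?mulr0.
  rewrite /ext_contract big1 // => j _; rewrite h ?mulr0 //.
  by rewrite add0n -lt0n card_gt0; apply/set0Pn; exists j; rewrite in_setU1 eqxx.
rewrite /head_contract big1 ?sub0r; last by move=> b _; rewrite h ?mulr0.
by rewrite (IH (strip c x)) ?oppr0 // => u J _; apply: h.
Qed.

Lemma contract_homog p x : homog p.+1 x -> homog p (contract x).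
Proof.
move=> h w; elim: w p x h => [|c w IH] p x h I hp.
  rewrite contract_nil /head_contract big1 ?add0r; last first.
    by move=> b _; rewrite h ?mulr0 // /= add1n eqSS.
  rewrite /ext_contract big1 // => j jI; rewrite h ?mulr0 //.
  by rewrite cardsU1 jI add0n add1n eqSS.
rewrite contract_cons /head_contract big1 ?sub0r; last first.
  by move=> b _; rewrite h ?mulr0 // /= !addSn !eqSS -addSn.
case: p h hp => [|p] h hp.
  by rewrite contract_homog0 ?oppr0 //; apply: strip_homog.
by rewrite (IH p (strip c x) (strip_homog c h)) ?oppr0 //; move: hp; rewrite /= addSn eqSS.
Qed.

Lemma lmul_tensor_homog p b x : homog p x -> homog p.+1 (lmul_tensor b x).
Proof. by move=> h [|c w] I //= hp; rewrite h ?mulr0 // -eqSS -addSn. Qed.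

Lemma lmul_wedge_homog p a x : homog p x -> homog p.+1 (lmul_wedge a x).
Proof.
move=> h w I hp; rewrite /lmul_wedge /ext_wedge; case: ifP => aI; last by rewrite mulr0.
rewrite h ?mulr0 //; apply: contra hp => /eqP <-.
by rewrite -(setD1K aI) cardsU1 in_setD1 eqxx /= setU1K ?in_setD1 ?eqxx // addnS.
Qed.

Lemma contract_exterior_only y I w : (forall u, y u I = 0) ->
  contract y w I = (-1) ^+ size w * ext_contract psiA (y w) I.
Proof.
elim: w y => [|c w IH] y h.
  by rewrite contract_nil /head_contract big1 ?add0r ?expr0 ?mul1r // => b _; rewrite h mulr0.
rewrite contract_cons /head_contract big1 ?sub0r; last by move=> b _; rewrite h mulr0.
by rewrite IH /= ?exprS ?mulN1r ?mulNr // => u; apply: h.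
Qed.

Lemma contract_pivot a0 y w J : (forall u I, a0 \notin I -> y u I = 0) -> a0 \in J ->
  contract y w (J :\ a0) = (-1) ^+ size w * (psiA a0 * ext_sign K a0 (J :\ a0) * y w J).
Proof.
move=> h aJ; rewrite contract_exterior_only; last by move=> u; rewrite h // in_setD1 eqxx.
congr (_ * _); rewrite /ext_contract (bigD1 a0) /=; last by rewrite in_setD1 eqxx.
rewrite setD1K // big1 ?addr0 // => j /andP [jJ ja].
by rewrite h ?mulr0 // in_setU1 eq_sym (negbTE ja) /= in_setD1 eqxx.
Qed.

End MixedContraction.

(* Vandermonde: a polynomial of degree < m with m distinct roots is zero. *)
Lemma vandermonde_kernel (K : fieldType) n m (xi : 'I_n -> K) (S : {set 'I_n})
    (v : 'I_m -> K) :
  injective xi -> #|S| = m ->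
  (forall i, i \in S -> \sum_(a < m) v a * xi i ^+ a = 0) ->
  forall a, v a = 0.
Proof.
move=> xinj cS h.
pose E (i : nat) := if insub i is Some a then v a else 0.
have p0 : \poly_(a < m) E a = 0.
  apply: (@roots_geq_poly_eq0 _ _ (map xi (enum S))).
  - apply/allP => z /mapP [i]; rewrite mem_enum => iS ->.
    rewrite /root horner_poly; apply/eqP; rewrite -[RHS](h i iS).
    by apply: eq_bigr => a _; rewrite /E valK.
  - by rewrite map_inj_uniq ?enum_uniq.
  - by rewrite size_map -cardE cS size_poly.
move=> a; have := congr1 (fun q : {poly K} => q`_a) p0.
by rewrite coef_poly ltn_ord coef0 /E valK.
Qed.

Section Cycles.
Variables (K : fieldType) (t k : nat).
Local Notation M := (mixed K t k).
Local Notation d := (k + t)%N.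

(* Left multiplication by the j-th basis vector of K^d = K^k + K^t. *)
Definition lmul (j : 'I_d) (x : M) : M :=
  match split j with inl a => lmul_wedge a x | inr b => lmul_tensor b x end.

Definition contractv (psi : 'I_d -> K) : M -> M :=
  contract (fun b => psi (rshift k b)) (fun a => psi (lshift t a)).

Lemma contractv_lmul psi j x w I :
  contractv psi (lmul j x) w I = psi j * x w I - lmul j (contractv psi x) w I.
Proof.
rewrite /lmul /contractv; have Ej := splitK j.
case E: (split j) => [a|b]; rewrite E in Ej; rewrite -Ej.
  exact: contract_lmul_wedge.
exact: contract_lmul_tensor.
Qed.

Lemma lmul0 j w I : lmul j (fun _ _ => 0) w I = 0.
Proof.
rewrite /lmul; case: (split j) => [a|b] /=.
  by rewrite /lmul_wedge /ext_wedge; case: ifP; rewrite !mulr0.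
by case: w => //= c w; rewrite mulr0.
Qed.

Lemma lmul_lin j (c : K) (x y : M) w I :
  lmul j (fun w I => c * x w I + y w I) w I = c * lmul j x w I + lmul j y w I.
Proof.
rewrite /lmul; case: (split j) => [a|b] /=.
  by rewrite /lmul_wedge ext_wedgeD ext_wedgeZ; ring.
by case: w => [|e w] /=; ring.
Qed.

Lemma lmul_homog p j x : homog p x -> homog p.+1 (lmul j x).
Proof.
by rewrite /lmul; case: (split j) => [a|b]; [apply: lmul_wedge_homog | apply: lmul_tensor_homog].
Qed.

Definition cycle (xs : 'I_d -> M) := forall w I, \sum_(j < d) lmul j (xs j) w I = 0.

Definition evalx (z : K) (xs : 'I_d -> M) : M :=
  fun w I => \sum_(j < d) z ^+ j * xs j w I.

Lemma evalx_homog p z xs : (forall j, homog p (xs j)) -> homog p (evalx z xs).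
Proof. by move=> hom w I hw; rewrite /evalx big1 // => j _; rewrite hom ?mulr0. Qed.

Lemma contractv_evalx psi z xs w I :
  contractv psi (evalx z xs) w I = \sum_(j < d) z ^+ j * contractv psi (xs j) w I.
Proof. by rewrite /evalx /contractv contract_sum; apply: eq_bigr => j _; rewrite contractZ. Qed.

(* By induction on |I|: the tensor components at I are read off the
   cycle condition at (b :: w, I), and the exterior ones then by Vandermonde. *)
Lemma cycle_data_recovery n (xi : 'I_n -> K) (S : {set 'I_n}) (xs : 'I_d -> M) :
  injective xi -> #|S| = k -> cycle xs ->
  (forall i, i \in S -> forall w I, evalx (xi i) xs w I = 0) ->
  forall j w I, xs j w I = 0.
Proof.
move=> xinj cS hcyc hS.
suff H m j w (I : {set 'I_k}) : (#|I| < m)%N -> xs j w I = 0.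
  by move=> j w I; apply: (H #|I|.+1).
elim: m j w I => [//|m IH] j w I; rewrite ltnS leq_eqVlt => /orP [/eqP cI|]; last exact: IH.
have tensor0 b w' : xs (rshift k b) w' I = 0.
  have := hcyc (b :: w') I; rewrite (bigD1 (rshift k b)) //= big1 ?addr0.
    by rewrite /lmul -[rshift k b]/(unsplit (inr b)) unsplitK /= eqxx mul1r.
  move=> j' nj'; rewrite /lmul; have Ej := splitK j'.
  case E: (split j') => [a|b']; rewrite E in Ej.
    rewrite /lmul_wedge /ext_wedge; case: ifP => aI; last by rewrite !mulr0.
    rewrite IH ?mulr0 //; move: cI; rewrite (cardsD1 a) aI add1n => <-.
    by [].
  rewrite /lmul_tensor /=; case: eqP => [eb|nb]; last by rewrite mul0r.
  by move: nj'; rewrite -Ej -eb eqxx.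
have Ej := splitK j; case E: (split j) => [a|b]; rewrite E in Ej; last by rewrite -Ej tensor0.
rewrite -Ej; apply: (@vandermonde_kernel K n k xi S (fun a => xs (lshift t a) w I) xinj cS).
move=> i iS; have := hS i iS w I; rewrite /evalx big_split_ord /= [X in _ + X]big1 ?addr0.
  by move=> H0; rewrite -[RHS]H0; apply: eq_bigr => a' _; rewrite mulrC.
by move=> b _; rewrite tensor0 mulr0.
Qed.

Definition powers (z : K) : 'I_d -> K := fun j => z ^+ j.

Lemma contract_avoiding (psi : 'I_d -> K) (a0 : 'I_k) mu (y : M) :
  psi (lshift t a0) != 0 -> homog mu.+1 y ->
  (forall w (I : {set 'I_k}), (size w + #|I|)%N = mu -> a0 \notin I ->
     contractv psi y w I = 0) ->
  forall w I, contractv psi y w I = 0.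
Proof.
move=> psi0 hy hrep w J.
have ylow u (I : {set 'I_k}) : a0 \notin I -> contractv psi y u I = 0.
  move=> aI; case: (eqVneq (size u + #|I|)%N mu) => [e|ne]; first exact: hrep.
  exact: contract_homog hy _ _ ne.
case a0J: (a0 \in J); last by apply: ylow; rewrite a0J.
have := contract_pivot (fun b => psi (rshift k b)) (fun a => psi (lshift t a)) w ylow a0J.
rewrite contract_contract => /esym /eqP.
rewrite mulf_eq0 signr_eq0 /= !mulf_eq0 (negbTE psi0) /ext_sign signr_eq0 /=.
by move/eqP.
Qed.

Lemma cycle_exact_repair n (xi : 'I_n -> K) (H : {set 'I_n}) f (xs : 'I_d -> M) mu
    (a0 : 'I_k) :
  injective xi -> #|H| = d -> nat_of_ord a0 = 0%N ->
  (forall j, homog mu.+1 (xs j)) -> cycle xs ->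
  (forall h, h \in H -> forall w (I : {set 'I_k}), (size w + #|I|)%N = mu -> a0 \notin I ->
     contractv (powers (xi f)) (evalx (xi h) xs) w I = 0) ->
  forall w I, evalx (xi f) xs w I = 0.
Proof.
move=> xinj cH a00 hom hcyc hrep.
set psi := powers (xi f).
have psi0 : psi (lshift t a0) != 0 by rewrite /psi /powers /= a00 expr0 oner_neq0.
(* By Vandermonde over the d helpers, every contraction iota_psi xs_j vanishes. *)
have parts0 j w I : contractv psi (xs j) w I = 0.
  apply: (@vandermonde_kernel K n d xi H (fun j => contractv psi (xs j) w I) xinj cH).
  move=> h hH; rewrite -[RHS](contract_avoiding psi0 (evalx_homog _ hom) (hrep h hH) w I).
  by rewrite contractv_evalx; apply: eq_bigr => j' _; rewrite mulrC.
(* Contracting the cycle condition leaves sum_j psi_j xs_j, the combination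
   at xi f. *)
move=> w I.
have : contractv psi (fun w I => \sum_(j < d) lmul j (xs j) w I) w I = 0.
  have -> : (fun w I => \sum_(j < d) lmul j (xs j) w I) = (fun _ _ => 0).
    by do 2 apply: functional_extensionality => ?; apply: hcyc.
  exact: contract0.
rewrite /contractv contract_sum.
under eq_bigr do rewrite -/(contractv psi) contractv_lmul.
rewrite sumrB.
under [X in _ - X = _]eq_bigr => j _.
  have -> : contractv psi (xs j) = fun _ _ => 0.
    by do 2 apply: functional_extensionality => ?; apply: parts0.
  rewrite lmul0. over.
by rewrite big1_eq subr0 => <-.
Qed.

End Cycles.

Lemma mul_lin1_mx (K : fieldType) m p (f : 'rV[K]_m -> 'rV[K]_p) :
  (forall a u v, f (a *: u + v) = a *: f u + f v) ->
  forall u, u *m lin1_mx f = f u.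
Proof.
move=> hf u; pose fL : {linear _ -> _} := HB.pack f (GRing.isLinear.Build _ _ _ _ f hf).
exact: (mul_rV_lin1 fL u).
Qed.

Lemma free_rows_in_kernel (K : fieldType) m p F (A : 'M[K]_(m, p)) :
  (F <= m - p)%N -> exists W : 'M[K]_(F, m), W *m A = 0 /\ row_free W.
Proof.
move=> hF; have hr : (F <= \rank (kermx A))%N.
  by rewrite mxrank_ker (leq_trans hF) // leq_sub2l // rank_leq_col.
have baseA : row_base (kermx A) *m A = 0 by apply/sub_kermxP; rewrite eq_row_base.
exists (pid_mx F *m row_base (kermx A)); split; first by rewrite -mulmxA baseA mulmx0.
by rewrite /row_free mxrankMfree ?row_base_free // rank_pid_mx.
Qed.

Section Coordinates.
Variables (K : fieldType) (t k : nat) (Q : {set 'I_k}) (p : nat).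
Local Notation M := (mixed K t k).
Local Notation B := (monomial t Q p).

Definition of_coords (y : 'rV[K]_#|{: B}|) : M :=
  fun w I => \sum_(c < #|{: B}|) y 0 c * (mono (enum_val c) == (w, I))%:R.
Definition to_coords (x : M) : 'rV[K]_#|{: B}| :=
  \row_c x (mono (enum_val c)).1 (mono (enum_val c)).2.

Lemma of_coords_mono y c : of_coords y (mono (enum_val c)).1 (mono (enum_val c)).2 = y 0 c.
Proof.
rewrite /of_coords (bigD1 c) //=.
have -> : ((mono (enum_val c)).1, (mono (enum_val c)).2) = mono (enum_val c).
  by case: (mono _).
rewrite eqxx mulr1 big1 ?addr0 // => c' nc.
case: eqP => [/mono_inj/enum_val_inj e|]; last by rewrite mulr0.
by rewrite e eqxx in nc.
Qed.

Lemma of_coords_homog y : homog p (of_coords y).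
Proof.
move=> w I hw; rewrite /of_coords big1 // => c _; case: eqP => [e|]; last by rewrite mulr0.
by have := mono_deg (enum_val c); rewrite e => hd; rewrite hd eqxx in hw.
Qed.

Lemma of_coords_lin a y z :
  of_coords (a *: y + z) = fun w I => a * of_coords y w I + of_coords z w I.
Proof.
do 2 apply: functional_extensionality => ?.
by rewrite /of_coords mulr_sumr -big_split; apply: eq_bigr => c _ /=; rewrite !mxE; ring.
Qed.

Lemma to_coords_eq0 x : to_coords x = 0 ->
  forall w (I : {set 'I_k}), (size w + #|I|)%N = p -> I \subset Q -> x w I = 0.
Proof.
move=> h w I hp IQ; have [b eb] := mono_surj hp IQ.
have := congr1 (fun v : 'rV[K]_#|{: B}| => v 0 (enum_rank b)) h.
by rewrite !mxE enum_rankK eb.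
Qed.

End Coordinates.

Lemma of_to_coords (K : fieldType) t k p (x : mixed K t k) :
  homog p x -> of_coords (to_coords [set: 'I_k] p x) = x.
Proof.
move=> hx; apply: functional_extensionality => w; apply: functional_extensionality => I.
case: (eqVneq (size w + #|I|)%N p) => [e|ne]; last by rewrite of_coords_homog // hx.
have [b eb] := mono_surj e (subsetT I).
by have := of_coords_mono (to_coords [set: 'I_k] p x) (enum_rank b); rewrite mxE enum_rankK eb.
Qed.

Section Code.
Variables (K : fieldType) (n t k mu' : nat) (xi : 'I_n -> K) (a0 : 'I_k).
Hypotheses (xi_inj : injective xi) (a0_first : nat_of_ord a0 = 0%N).
Local Notation mu := mu'.+1.
Local Notation d := (k + t)%N.
Local Notation M := (mixed K t k).
Local Notation alpha := #|{: monomial t [set: 'I_k] mu}|.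
Local Notation alpha_next := #|{: monomial t [set: 'I_k] mu.+1}|.
Local Notation beta := #|{: monomial t (~: [set a0]) mu'}|.

(* A vector u of length d * alpha is read as a d-tuple of elements of M_mu. *)
Definition component (u : 'rV[K]_(d * alpha)) (j : 'I_d) : 'rV[K]_alpha :=
  \row_c u 0 (mxvec_index j c).
Definition file_part (u : 'rV[K]_(d * alpha)) (j : 'I_d) : M := of_coords (component u j).

(* The obstruction sum_j L_j x_j, whose kernel is the space of files. *)
Definition cycle_map (u : 'rV[K]_(d * alpha)) : 'rV[K]_alpha_next :=
  to_coords [set: 'I_k] mu.+1 (fun w I => \sum_(j < d) lmul j (file_part u j) w I).

Definition node_map (i : 'I_n) (u : 'rV[K]_(d * alpha)) : 'rV[K]_alpha :=
  to_coords [set: 'I_k] mu (evalx (xi i) (file_part u)).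

Definition repair_map (f : 'I_n) (y : 'rV[K]_alpha) : 'rV[K]_beta :=
  to_coords (~: [set a0]) mu' (contractv (powers (xi f)) (of_coords y)).

Lemma file_part_lin a u v j :
  file_part (a *: u + v) j = fun w I => a * file_part u j w I + file_part v j w I.
Proof.
rewrite /file_part.
have -> : component (a *: u + v) j = a *: component u j + component v j.
  by apply/rowP => c; rewrite !mxE.
exact: of_coords_lin.
Qed.

Lemma cycle_map_lin a u v : cycle_map (a *: u + v) = a *: cycle_map u + cycle_map v.
Proof.
apply/rowP => c; rewrite !mxE mulr_sumr -big_split; apply: eq_bigr => j _ /=.
by rewrite file_part_lin lmul_lin.
Qed.

Lemma node_map_lin i a u v : node_map i (a *: u + v) = a *: node_map i u + node_map i v.
Proof.
apply/rowP => c; rewrite !mxE /evalx mulr_sumr -big_split; apply: eq_bigr => j _ /=.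
by rewrite file_part_lin; ring.
Qed.

Lemma repair_map_lin f a y z : repair_map f (a *: y + z) = a *: repair_map f y + repair_map f z.
Proof. by apply/rowP => r; rewrite !mxE of_coords_lin /contractv contract_lin. Qed.

Lemma file_part_homog u j : homog mu (file_part u j).
Proof. exact: of_coords_homog. Qed.

Lemma cycle_of_kernel u : cycle_map u = 0 -> cycle (file_part u).
Proof.
move=> hu w I; case: (eqVneq (size w + #|I|)%N mu.+1) => [e|ne].
  exact: (to_coords_eq0 hu e (subsetT I)).
by rewrite big1 // => j _; rewrite (lmul_homog j (file_part_homog u j)).
Qed.

Lemma file_part_eq0 u : (forall j w I, file_part u j w I = 0) -> u = 0.
Proof.
move=> h; apply/rowP => r; case/mxvec_indexP: r => j c.
by have := h j (mono (enum_val c)).1 (mono (enum_val c)).2; rewrite /file_part of_coords_mono !mxE.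
Qed.

Lemma node_map_eq0 i u : node_map i u = 0 -> forall w I, evalx (xi i) (file_part u) w I = 0.
Proof.
move=> hc w I; case: (eqVneq (size w + #|I|)%N mu) => [e|ne].
  exact: (to_coords_eq0 hc e (subsetT I)).
exact: evalx_homog (@file_part_homog u) _ _ ne.
Qed.

Lemma file_data_recovery (S : {set 'I_n}) u :
  cycle_map u = 0 -> #|S| = k -> (forall i, i \in S -> node_map i u = 0) -> u = 0.
Proof.
move=> hu cS hS; apply: file_part_eq0.
apply: (cycle_data_recovery xi_inj cS (cycle_of_kernel hu)) => i iS.
exact: node_map_eq0 (hS i iS).
Qed.

Lemma file_exact_repair (H : {set 'I_n}) f u :
  cycle_map u = 0 -> #|H| = d ->
  (forall h, h \in H -> repair_map f (node_map h u) = 0) -> node_map f u = 0.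
Proof.
move=> hu cH hrep; apply/rowP => c; rewrite !mxE.
apply: (cycle_exact_repair xi_inj cH a0_first (@file_part_homog u) (cycle_of_kernel hu)).
move=> h hH w I e aI.
have hD : homog mu (evalx (xi h) (file_part u)) by apply: evalx_homog; apply: file_part_homog.
have := hrep h hH; rewrite /repair_map /node_map of_to_coords // => /to_coords_eq0; apply=> //.
by rewrite subsetC sub1set inE.
Qed.

(* Any F <= d * alpha - alpha_next is achievable: the files are F independent
   vectors in the kernel of the cycle map. *)
Lemma regen_code_exists F : (F <= d * alpha - alpha_next)%N ->
  exists (G : 'I_n -> 'M[K]_(F, alpha)) (rep : 'I_n -> 'I_n -> 'rV[K]_alpha -> 'rV[K]_beta),
    linear_regen_code K n k d alpha beta F G rep.
Proof.
move=> hF; have [W [Wcycle Wfree]] := free_rows_in_kernel (lin1_mx cycle_map) hF.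
have cycleW (x : 'rV[K]_F) : cycle_map (x *m W) = 0.
  by rewrite -(mul_lin1_mx cycle_map_lin) -mulmxA Wcycle mulmx0.
have nodeW (x : 'rV[K]_F) i : x *m (W *m lin1_mx (node_map i)) = node_map i (x *m W).
  by rewrite mulmxA (mul_lin1_mx (@node_map_lin i)).
exists (fun i => W *m lin1_mx (node_map i)), (fun _ => repair_map); split.
- by move=> h f c x y; rewrite mulmxDl -scalemxAl repair_map_lin.
- move=> S cS x y hS; apply/eqP; rewrite -subr_eq0; apply/eqP.
  apply: (row_free_inj Wfree); rewrite mul0mx.
  apply: (file_data_recovery (cycleW _) cS) => i iS.
  by rewrite -nodeW mulmxBl (hS i iS) subrr.
- move=> f H _ cH x y hrep; apply/eqP; rewrite -subr_eq0 -mulmxBl nodeW.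
  apply/eqP; apply: (file_exact_repair (cycleW _) cH) => h hH.
  rewrite -nodeW mulmxBl -[_ - _]addrC -scaleN1r repair_map_lin.
  by rewrite (hrep h hH) scaleN1r addNr.
Qed.

End Code.

Local Close Scope ring_scope.

Lemma card_alpha t k mu : #|{: monomial t [set: 'I_k] mu}| = alpha_par k (k + t) mu.
Proof. by rewrite card_monomial cardsT card_ord /alpha_par addKn. Qed.

Lemma card_beta t k (a0 : 'I_k) mu' :
  #|{: monomial t (~: [set a0]) mu'}| = beta_par k (k + t) mu'.+1.
Proof.
rewrite card_monomial cardsC1 card_ord /beta_par addKn [RHS]big_ord_recl /= muln0 add0n.
by apply: eq_bigr => i _; rewrite subSS.
Qed.

(* F(k, d; mu) = d * alpha(mu) - alpha(mu + 1), using
   alpha(mu + 1) = (d - k) * alpha(mu) + C(k, mu + 1). *)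
Lemma card_F t k mu : F_par k (k + t) mu =
  ((k + t) * #|{: monomial t [set: 'I_k] mu}| - #|{: monomial t [set: 'I_k] mu.+1}|)%N.
Proof.
rewrite !card_monomial cardsT card_ord /F_par addKn.
set al := \sum_(i < mu.+1) t ^ (mu - i) * 'C(k, i).
have al_next : \sum_(m < mu.+2) t ^ (mu.+1 - m) * 'C(k, m) = (t * al + 'C(k, mu.+1))%N.
  rewrite big_ord_recr /= subnn expn0 mul1n; congr (_ + _)%N.
  rewrite /al big_distrr /=; apply: eq_bigr => i _.
  by rewrite subSn ?expnS ?mulnA // -ltnS.
have kal : \sum_(m < mu.+1) k * t ^ (mu - m) * 'C(k, m) = (k * al)%N.
  by rewrite /al big_distrr /=; apply: eq_bigr => i _; rewrite mulnA.
by rewrite al_next kal mulnDl [(t * _ + _)%N]addnC subnDr.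
Qed.

Theorem theorem1 (n k d mu : nat) (K : finFieldType)
  (hk : (1 <= k)%N) (hkd : (k <= d)%N) (hdn : (d < n)%N)
  (hmu1 : (1 <= mu)%N) (hmuk : (mu <= k)%N) (hq : (n <= #|K|)%N) :
  exists (G : 'I_n -> 'M[K]_(F_par k d mu, alpha_par k d mu))
         (rep : 'I_n -> 'I_n -> 'rV[K]_(alpha_par k d mu) -> 'rV[K]_(beta_par k d mu)),
    linear_regen_code K n k d (alpha_par k d mu) (beta_par k d mu) (F_par k d mu) G rep.
Proof.
have [t ->] : exists t, d = (k + t)%N by exists (d - k); rewrite subnKC.
case: mu hmu1 hmuk => [//|mu'] _ _.
pose a0 : 'I_k := Ordinal hk.
pose xi (i : 'I_n) : K := enum_val (widen_ord hq i).
have xi_inj : injective xi.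
  by move=> i j /enum_val_inj /(congr1 val) eij; apply: val_inj.
rewrite -card_alpha -(card_beta t a0).
by apply: (@regen_code_exists K n t k mu' xi a0 xi_inj erefl); rewrite card_F.
Qed.
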